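(* Let $SI$, $UI$, $CI$ be a nonnegative bivariate information decomposition. Define the extractable shared information $$\overline{SI}(S;X_1,X_2):=\sup_{f:\mathcal{S}\to\mathcal{S}'} SI(f(S);X_1,X_2),$$ the supremum being over all functions from the alphabet $\mathcal{S}$ of $S$ to an arbitrary finite set $\mathcal{S}'$, and define $$\overline{UI}^*(S;X_1\setminus X_2):=I(S;X_1)-\overline{SI}(S;X_1,X_2),\quad \overline{UI}^*(S;X_2\setminus X_1):=I(S;X_2)-\overline{SI}(S;X_1,X_2),$$ $$\overline{CI}^*(S;X_1,X_2):=I(S;X_1X_2)-\overline{SI}(S;X_1,X_2)-\overline{UI}^*(S;X_1\setminus X_2)-\overline{UI}^*(S;X_2\setminus X_1).$$ Then $\overline{SI}$, $\overline{UI}^*(S;X_1\setminus X_2)$, $\overline{UI}^*(S;X_2\setminus X_1)$ and $\overline{CI}^*$ are nonnegative, and moreover: (a) $\overline{SI}(S;X_1,X_2)\ge SI(S;X_1,X_2)$; (b) $\overline{CI}^*(S;X_1,X_2)\ge CI(S;X_1,X_2)$; (c) if $f^*$ is a function achieving the supremum in the definition of $\overline{SI}(S;X_1,X_2)$, then $UI(f^*(S);X_1\setminus X_2)\le \overline{UI}^*(S;X_1\setminus X_2)\le UI(S;X_1\setminus X_2)$.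
   Context: All random variables have finite alphabets. A nonnegative bivariate information decomposition consists of nonnegative functions $SI(S;X_1,X_2)$, $UI(S;X_1\setminus X_2)$, $UI(S;X_2\setminus X_1)$, $CI(S;X_1,X_2)$, defined for every joint distribution of $(S,X_1,X_2)$ with arbitrary finite alphabets and depending continuously on it, such that $I(S;X_1X_2)=SI(S;X_1,X_2)+CI(S;X_1,X_2)+UI(S;X_1\setminus X_2)+UI(S;X_2\setminus X_1)$, $I(S;X_1)=SI(S;X_1,X_2)+UI(S;X_1\setminus X_2)$ and $I(S;X_2)=SI(S;X_1,X_2)+UI(S;X_2\setminus X_1)$, where $I$ denotes mutual information and $I(S;X_1X_2)$ is the mutual information between $S$ and the pair $(X_1,X_2)$. *)

From HB Require Import structures.
From mathcomp Require Import all_boot all_order all_algebra.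
From mathcomp Require Import boolp classical_sets reals exp.
Set Implicit Arguments. Unset Strict Implicit. Unset Printing Implicit Defensive.
Import Order.TTheory GRing.Theory Num.Theory.
Local Open Scope ring_scope.

Section InfoDefs.
Variable R : realType.

Definition is_dist (T : finType) (p : T -> R) : Prop :=
  (forall t, 0 <= p t) /\ \sum_(t : T) p t = 1.

(* mutual information I(A;B) of a joint pmf q on A * B (natural log,
   convention 0 log 0 = 0) *)
Definition MI (A B : finType) (q : A * B -> R) : R :=
  \sum_(ab : A * B)
     (if q ab == 0 then 0
      else q ab * ln (q ab / ((\sum_(b : B) q (ab.1, b)) *
                               (\sum_(a : A) q (a, ab.2))))).

Definition pS1 (S X1 X2 : finType) (p : S * X1 * X2 -> R) : S * X1 -> R :=
  fun sx => \sum_(x2 : X2) p (sx.1, sx.2, x2).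
Definition pS2 (S X1 X2 : finType) (p : S * X1 * X2 -> R) : S * X2 -> R :=
  fun sx => \sum_(x1 : X1) p (sx.1, x1, sx.2).
Definition pS12 (S X1 X2 : finType) (p : S * X1 * X2 -> R) : S * (X1 * X2) -> R :=
  fun sx => p (sx.1, sx.2.1, sx.2.2).

Definition I_S1 (S X1 X2 : finType) (p : S * X1 * X2 -> R) := MI (pS1 p).
Definition I_S2 (S X1 X2 : finType) (p : S * X1 * X2 -> R) := MI (pS2 p).
Definition I_S12 (S X1 X2 : finType) (p : S * X1 * X2 -> R) := MI (pS12 p).

Definition push (S S' X1 X2 : finType) (f : S -> S') (p : S * X1 * X2 -> R)
  : S' * X1 * X2 -> R :=
  fun t => \sum_(s : S | f s == t.1.1) p (s, t.1.2, t.2).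

Definition functional := forall S X1 X2 : finType, (S * X1 * X2 -> R) -> R.

Definition cont_on_dists (F : functional) : Prop :=
  forall (S X1 X2 : finType) (p : S * X1 * X2 -> R), is_dist p ->
  forall eps : R, 0 < eps -> exists2 delta : R, 0 < delta &
    forall q : S * X1 * X2 -> R, is_dist q ->
      (forall t, `|q t - p t| < delta) -> `|F S X1 X2 q - F S X1 X2 p| < eps.

Record nonneg_decomp (SI UI1 UI2 CI : functional) : Prop := {
  nd_ge0 : forall (S X1 X2 : finType) (p : S * X1 * X2 -> R), is_dist p ->
     [/\ 0 <= SI _ _ _ p, 0 <= UI1 _ _ _ p, 0 <= UI2 _ _ _ p & 0 <= CI _ _ _ p];
  nd_I12 : forall (S X1 X2 : finType) (p : S * X1 * X2 -> R), is_dist p ->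
     I_S12 p = SI _ _ _ p + CI _ _ _ p + UI1 _ _ _ p + UI2 _ _ _ p;
  nd_I1 : forall (S X1 X2 : finType) (p : S * X1 * X2 -> R), is_dist p ->
     I_S1 p = SI _ _ _ p + UI1 _ _ _ p;
  nd_I2 : forall (S X1 X2 : finType) (p : S * X1 * X2 -> R), is_dist p ->
     I_S2 p = SI _ _ _ p + UI2 _ _ _ p;
  nd_cont : [/\ cont_on_dists SI, cont_on_dists UI1, cont_on_dists UI2
              & cont_on_dists CI]
}.

Definition SIbar (SI : functional) (S X1 X2 : finType) (p : S * X1 * X2 -> R) : R :=
  sup [set r : R | exists (S' : finType) (f : S -> S'), r = SI _ _ _ (push f p)].

Definition UIbar1 (SI : functional) (S X1 X2 : finType) (p : S * X1 * X2 -> R) : R :=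
  I_S1 p - SIbar SI p.
Definition UIbar2 (SI : functional) (S X1 X2 : finType) (p : S * X1 * X2 -> R) : R :=
  I_S2 p - SIbar SI p.
Definition CIbar (SI : functional) (S X1 X2 : finType) (p : S * X1 * X2 -> R) : R :=
  I_S12 p - SIbar SI p - UIbar1 SI p - UIbar2 SI p.

End InfoDefs.

(* Coarsening the target cannot increase mutual information: for f : S -> S',
   I(f(S);Xi) <= I(S;Xi) (data processing, from ln x <= x - 1).  Since the unique
   informations are nonnegative, SI(f(S);X1,X2) <= I(f(S);Xi) <= I(S;Xi), so the
   supremum defining the extractable shared information is finite and lies between
   SI(S;X1,X2) (take f = id) and min(I(S;X1), I(S;X2)).  Every claim then follows
   by linear arithmetic from the decomposition identities; e.g. the new synergy is
   CI + (SIbar - SI). *)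
From HB Require Import structures.
From mathcomp Require Import all_boot all_order all_algebra.
From mathcomp Require Import boolp classical_sets reals exp.
From mathcomp Require Import ring lra.
Import Order.TTheory GRing.Theory Num.Theory.
Local Open Scope ring_scope.

Section Sums.
Context {V : nmodType}.

Lemma sum_pair {A B : finType} (F : A * B -> V) :
  \sum_(t : A * B) F t = \sum_a \sum_b F (a, b).
Proof. by rewrite [RHS]pair_big; apply: eq_bigr => -[]. Qed.

Lemma sum_fibers {I J : finType} (g : I -> J) (F : I -> V) :
  \sum_(j : J) \sum_(i | g i == j) F i = \sum_i F i.
Proof. by rewrite [RHS](partition_big g xpredT). Qed.

End Sums.

Section LnBounds.
Context {R : realType}.

Lemma ln_le_subr1 {x : R} : 0 < x -> ln x <= x - 1.
Proof. by move=> x0; have := expR_ge1Dx (ln x); rewrite lnK ?posrE //; lra. Qed.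

Lemma mulr_lnB_ge (q x y : R) : 0 <= q -> 0 < x -> 0 < y ->
  q - q * (y / x) <= q * ln x - q * ln y.
Proof.
move=> q0 x0 y0.
have := ln_le_subr1 (divr_gt0 y0 x0); rewrite ln_div ?posrE // => le_ln.
by rewrite -mulrBr -[X in X - _]mulr1 -mulrBr ler_wpM2l //; lra.
Qed.

End LnBounds.

Definition coarsen {R : realType} {A A' B : finType} (f : A -> A') (q : A * B -> R)
  : A' * B -> R :=
  fun t => \sum_(a | f a == t.1) q (a, t.2).

Lemma MIE {R : realType} {A B : finType} (q : A * B -> R) :
  MI q = \sum_(ab : A * B) q ab * ln (q ab / ((\sum_(b : B) q (ab.1, b)) *
                                              (\sum_(a : A) q (a, ab.2)))).
Proof. by apply: eq_bigr => ab _; case: eqP => [->|]; rewrite ?mul0r. Qed.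

Section DataProcessing.
Context {R : realType} {A A' B : finType} (f : A -> A') {q : A * B -> R}.
Hypothesis q_ge0 : forall t, 0 <= q t.

Let qA a := \sum_(b : B) q (a, b).
Let qB b := \sum_(a : A) q (a, b).
Let q' := coarsen f q.
Let q'A a' := \sum_(b : B) q' (a', b).

Let q'_ge0 t : 0 <= q' t.
Proof. exact: sumr_ge0. Qed.

Let le_sum_term {I : finType} {P : pred I} (F : I -> R) i :
  (forall j, 0 <= F j) -> P i -> F i <= \sum_(j | P j) F j.
Proof. by move=> F0 Pi; rewrite (bigD1 i) //= lerDl sumr_ge0. Qed.

Lemma coarsen_marginal2 b : \sum_(a' : A') q' (a', b) = qB b.
Proof. by rewrite /q' /coarsen /= (sum_fibers f (fun a => q (a, b))). Qed.

Lemma MI_coarsenE : MI q' =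
  \sum_(ab : A * B) q ab * ln (q' (f ab.1, ab.2) / (q'A (f ab.1) * qB ab.2)).
Proof.
rewrite MIE !sum_pair -(sum_fibers f (fun a => \sum_b q (a, b) *
  ln (q' (f a, b) / (q'A (f a) * qB b)))).
apply: eq_bigr => a' _; rewrite exchange_big; apply: eq_bigr => b _ /=.
by rewrite coarsen_marginal2 mulr_suml; apply: eq_bigr => a /eqP ->.
Qed.

Lemma coarsen_mass_le :
  \sum_(ab : A * B) qA ab.1 * (q' (f ab.1, ab.2) / q'A (f ab.1)) <= \sum_ab q ab.
Proof.
rewrite !sum_pair; apply: ler_sum => a _ /=.
rewrite -mulr_sumr -mulr_suml -/(q'A (f a)).
have [->|q'A_neq0] := eqVneq (q'A (f a)) 0; first by rewrite invr0 !mulr0 sumr_ge0.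
by rewrite divff // mulr1.
Qed.

Lemma MI_coarsen_term_ge (ab : A * B) :
  q ab - qA ab.1 * (q' (f ab.1, ab.2) / q'A (f ab.1)) <=
  q ab * ln (q ab / (qA ab.1 * qB ab.2)) -
  q ab * ln (q' (f ab.1, ab.2) / (q'A (f ab.1) * qB ab.2)).
Proof.
case: ab => a b /=.
have [->|q_neq0] := eqVneq (q (a, b)) 0.
  by rewrite !mul0r subrr sub0r oppr_le0 mulr_ge0 ?divr_ge0 ?sumr_ge0.
have q_gt0 : 0 < q (a, b) by rewrite lt0r q_neq0 q_ge0.
have qA_gt0 : 0 < qA a.
  by apply: lt_le_trans q_gt0 _; apply: (le_sum_term (fun b => q (a, b))).
have qB_gt0 : 0 < qB b.
  by apply: lt_le_trans q_gt0 _; apply: (le_sum_term (fun a => q (a, b))).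
have q'_gt0 : 0 < q' (f a, b).
  by apply: lt_le_trans q_gt0 _; apply: (le_sum_term (fun a => q (a, b))).
have q'A_gt0 : 0 < q'A (f a).
  by apply: lt_le_trans q'_gt0 _; apply: (le_sum_term (fun b => q' (f a, b))).
have -> : qA a * (q' (f a, b) / q'A (f a)) =
    q (a, b) * (q' (f a, b) / (q'A (f a) * qB b) / (q (a, b) / (qA a * qB b))).
  by field; rewrite !gt_eqF.
by apply: mulr_lnB_ge; rewrite ?ltW ?divr_gt0 ?mulr_gt0.
Qed.

Lemma MI_coarsen_le : MI q' <= MI q.
Proof.
rewrite -subr_ge0 MIE MI_coarsenE -sumrB.
apply: le_trans (ler_sum _ (fun ab _ => MI_coarsen_term_ge ab)).
by rewrite sumrB subr_ge0 coarsen_mass_le.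
Qed.

End DataProcessing.

Section Push.
Context {R : realType} {S S' X1 X2 : finType} (f : S -> S') {p : S * X1 * X2 -> R}.
Hypothesis Hp : is_dist p.

Lemma push_dist : is_dist (push f p).
Proof.
case: Hp => p_ge0 p_sum1; split=> [t|]; first exact: sumr_ge0.
rewrite !sum_pair /push /= -p_sum1 !sum_pair -(sum_fibers f).
apply: eq_bigr => s' _; rewrite [RHS]exchange_big.
by apply: eq_bigr => x1 _; exact: exchange_big.
Qed.

Lemma I_S1_push_le : I_S1 (push f p) <= I_S1 p.
Proof.
rewrite /I_S1; have -> : pS1 (push f p) = coarsen f (pS1 p).
  by apply: funext => t; rewrite /pS1 /push /coarsen /= exchange_big.
by apply: MI_coarsen_le => t; apply: sumr_ge0 => x _; case: Hp.
Qed.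

Lemma I_S2_push_le : I_S2 (push f p) <= I_S2 p.
Proof.
rewrite /I_S2; have -> : pS2 (push f p) = coarsen f (pS2 p).
  by apply: funext => t; rewrite /pS2 /push /coarsen /= exchange_big.
by apply: MI_coarsen_le => t; apply: sumr_ge0 => x _; case: Hp.
Qed.

End Push.

Lemma push_id {R : realType} {S X1 X2 : finType} (p : S * X1 * X2 -> R) :
  push id p = p.
Proof. by apply: funext => -[[s x1] x2]; exact: big_pred1_eq. Qed.

Section ExtractableSharedInformation.
Context {R : realType} {SI UI1 UI2 CI : functional R}.
Hypothesis HD : nonneg_decomp SI UI1 UI2 CI.
Context {S X1 X2 : finType} {p : S * X1 * X2 -> R}.
Hypothesis Hp : is_dist p.

Lemma SI_push_le_I_S1 (S' : finType) (f : S -> S') : SI _ _ _ (push f p) <= I_S1 p.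
Proof.
have Hq := push_dist f Hp; have [_ UI1_ge0 _ _] := nd_ge0 HD Hq.
by apply: le_trans (I_S1_push_le f Hp); rewrite (nd_I1 HD Hq) lerDl.
Qed.

Lemma SI_push_le_I_S2 (S' : finType) (f : S -> S') : SI _ _ _ (push f p) <= I_S2 p.
Proof.
have Hq := push_dist f Hp; have [_ _ UI2_ge0 _] := nd_ge0 HD Hq.
by apply: le_trans (I_S2_push_le f Hp); rewrite (nd_I2 HD Hq) lerDl.
Qed.

Local Open Scope classical_set_scope.

Let SI_coarsenings :=
  [set r : R | exists (S' : finType) (f : S -> S'), r = SI _ _ _ (push f p)].

Let SI_in_coarsenings : SI_coarsenings (SI _ _ _ p).
Proof. by exists S, id; rewrite push_id. Qed.

Lemma SI_le_SIbar : SI _ _ _ p <= SIbar SI p.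
Proof.
apply: sup_upper_bound SI_in_coarsenings; split; first by exists (SI _ _ _ p).
by exists (I_S1 p) => _ [S' [f ->]]; exact: SI_push_le_I_S1.
Qed.

Lemma SIbar_le_I_S1 : SIbar SI p <= I_S1 p.
Proof.
by apply: ge_sup; [exists (SI _ _ _ p) | move=> _ [S' [f ->]]; exact: SI_push_le_I_S1].
Qed.

Lemma SIbar_le_I_S2 : SIbar SI p <= I_S2 p.
Proof.
by apply: ge_sup; [exists (SI _ _ _ p) | move=> _ [S' [f ->]]; exact: SI_push_le_I_S2].
Qed.

End ExtractableSharedInformation.

Theorem lemma2 (R : realType) (SI UI1 UI2 CI : functional R)
  (HD : nonneg_decomp SI UI1 UI2 CI)
  (S X1 X2 : finType) (p : S * X1 * X2 -> R) (Hp : is_dist p) :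
  [/\ 0 <= SIbar SI p, 0 <= UIbar1 SI p, 0 <= UIbar2 SI p, 0 <= CIbar SI p &
   [/\ SI _ _ _ p <= SIbar SI p,
       CI _ _ _ p <= CIbar SI p &
       forall (S' : finType) (f : S -> S'),
         SI _ _ _ (push f p) = SIbar SI p ->
         UI1 _ _ _ (push f p) <= UIbar1 SI p /\ UIbar1 SI p <= UI1 _ _ _ p]].
Proof.
have SI_le := SI_le_SIbar HD Hp.
have le_I1 := SIbar_le_I_S1 HD Hp; have le_I2 := SIbar_le_I_S2 HD Hp.
have [SI_ge0 UI1_ge0 UI2_ge0 CI_ge0] := nd_ge0 HD Hp.
have I12E := nd_I12 HD Hp; have I1E := nd_I1 HD Hp; have I2E := nd_I2 HD Hp.
rewrite /CIbar /UIbar1 /UIbar2.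
split; try lra; split; try lra.
move=> S' f SI_push_eq.
have Hq := push_dist f Hp; have [_ UI1q_ge0 _ _] := nd_ge0 HD Hq.
have := nd_I1 HD Hq; have := I_S1_push_le f Hp.
split; lra.
Qed.
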